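(* Let $(S,\varepsilon),(S',\varepsilon')\in\mathcal{SC}(\mathcal M)$ with $(S,\varepsilon)\le(S',\varepsilon')$ and $S'\subsetneq S$. Then $\operatorname{genus}(S',\varepsilon')<\operatorname{genus}(S,\varepsilon)$. Consequently $\mathcal{SC}(\mathcal M)$ is graded, with the degree of $(S,\varepsilon)$ equal to $\operatorname{genus}(\mathcal M)-\operatorname{genus}(S,\varepsilon)$. (In particular, for a finite graph $G$, the poset of strongly connected orientations of subgraphs is graded by $\operatorname{genus}(G)-\operatorname{genus}(H)$.)
   Context: Let $\mathcal M$ be a regular matroid on a finite ground set $E$, represented over $\mathbb R$ by a totally unimodular matrix $M$ with columns $c_e$, $e\in E$. $\operatorname{genus}(\mathcal M)=\dim\ker M$. An oriented submatroid is a pair $(S,\varepsilon)$ with $S\subseteq E$ and $\varepsilon:S\to\{\pm1\}$. It is strongly connected if for every $e\in S$ there is $w\in\mathbb Z_{\ge0}^S$ with $w_e\ge1$ and $\sum_{f\in S}w_f\varepsilon_f c_f=0$. The genus of $(S,\varepsilon)$ is $\dim\ker M_S$, where $M_S$ is the submatrix of columns indexed by $S$. $\mathcal{SC}(\mathcal M)$ is the set of strongly connected oriented submatroids, ordered by $(S,\varepsilon)\le(S',\varepsilon')$ iff $S'\subseteq S$ and $\varepsilon'=\varepsilon|_{S'}$. For a graph, the genus of a (possibly disconnected) subgraph $H$ (on all vertices) is the dimension of the kernel of its signed incidence matrix. *)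

From HB Require Import structures.
From mathcomp Require Import all_boot all_order all_algebra.
From mathcomp Require Import reals.
Set Implicit Arguments. Unset Strict Implicit. Unset Printing Implicit Defensive.
Import Order.TTheory GRing.Theory Num.Theory.
Local Open Scope ring_scope.

(* Ground set E = 'I_n; the matroid is represented by M : 'M[R]_(m, n),
   column c_e = col e M. *)

Definition totally_unimodular (R : realType) (m n : nat) (M : 'M[R]_(m, n)) :=
  forall (k : nat) (f : 'I_k -> 'I_m) (g : 'I_k -> 'I_n),
    \det (mxsub f g M) \in [:: 0; 1; -1].

(* Orientation: eps e = true means +1, false means -1; only its values on S
   are relevant. *)
Definition sgn (R : realType) (b : bool) : R := if b then 1 else -1.

Definition colsubset (R : realType) (m n : nat) (M : 'M[R]_(m, n))
  (S : {set 'I_n}) : 'M[R]_(m, #|S|) :=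
  colsub (fun i : 'I_#|S| => enum_val i) M.

(* dim ker of a matrix A (column kernel {x | A x = 0}) *)
Definition dimker (R : realType) (m k : nat) (A : 'M[R]_(m, k)) : nat :=
  \rank (kermx A^T).

Definition matroid_genus (R : realType) (m n : nat) (M : 'M[R]_(m, n)) : nat :=
  dimker M.

Definition osub_genus (R : realType) (m n : nat) (M : 'M[R]_(m, n))
  (S : {set 'I_n}) (eps : 'I_n -> bool) : nat :=
  dimker (colsubset M S).

Definition strongly_connected (R : realType) (m n : nat) (M : 'M[R]_(m, n))
  (S : {set 'I_n}) (eps : 'I_n -> bool) : Prop :=
  forall e, e \in S -> exists w : 'I_n -> nat,
    (1 <= w e)%N /\
    \sum_(f in S) ((w f)%:R * sgn R (eps f)) *: col f M = 0.

Definition osub_le (n : nat) (S : {set 'I_n}) (eps : 'I_n -> bool)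
  (S' : {set 'I_n}) (eps' : 'I_n -> bool) : Prop :=
  S' \subset S /\ (forall e, e \in S' -> eps' e = eps e).

(* strict order (oriented submatroids are equal iff same S and same signs on S) *)
Definition osub_lt (n : nat) (S : {set 'I_n}) (eps : 'I_n -> bool)
  (S' : {set 'I_n}) (eps' : 'I_n -> bool) : Prop :=
  osub_le S eps S' eps' /\ S' != S.

Definition sc_covers (R : realType) (m n : nat) (M : 'M[R]_(m, n))
  (S : {set 'I_n}) (eps : 'I_n -> bool)
  (S' : {set 'I_n}) (eps' : 'I_n -> bool) : Prop :=
  osub_lt S eps S' eps' /\
  ~ (exists (T : {set 'I_n}) (tau : 'I_n -> bool),
        strongly_connected M T tau /\ osub_lt S eps T tau /\ osub_lt T tau S' eps').

Definition sc_degree (R : realType) (m n : nat) (M : 'M[R]_(m, n))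
  (S : {set 'I_n}) (eps : 'I_n -> bool) : int :=
  (matroid_genus M)%:Z - (osub_genus M S eps)%:Z.

(* The genus of (S, eps) is the dimension of the cycle space of S: the row
   vectors supported on S in the kernel of v |-> v M^T.  A flow x on S is
   encoded by the vector (x_f * eps_f)_f, and (S, eps) is strongly connected
   iff every element of S carries a nonnegative integral circulation.
   1. If S' is a proper subset of S, a circulation of S positive at some
      element of S \ S' lies in the cycle space of S but not in that of S',
      so the genus drops strictly (cycle_space_proper).
   2. If the genus drops by at least two, some cycle of S, corrected by a
      multiple of a positive circulation of S, vanishes at a chosen f1 in
      S \ S' but not on all of S \ S'.  Combining it with positive
      circulations of S and S' gives a nonnegative circulation whose support
      lies strictly between S' and S (circulation_between); over the
      rationals that support is strongly connected (support_sconnected), so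
      (S, eps) cannot cover (S', eps').
   Total unimodularity is only used to see that M is the image of a rational
   matrix (rat_model), over which the argument is carried out; the main
   theorem combines 1 and 2. *)

From HB Require Import structures.
From mathcomp Require Import all_boot all_order all_algebra.
From mathcomp Require Import reals.
From mathcomp Require Import ring lra.
Import Order.TTheory GRing.Theory Num.Theory.
Set Implicit Arguments. Unset Strict Implicit. Unset Printing Implicit Defensive.
Local Open Scope ring_scope.

Definition orsign (F : pzRingType) (b : bool) : F := if b then 1 else -1.

Lemma orsignK (F : pzRingType) (b : bool) : orsign F b * orsign F b = 1.
Proof. by case: b; rewrite /orsign ?mulr1 ?mulrNN ?mulr1. Qed.

Definition orient (F : pzRingType) (n : nat) (S : {set 'I_n}) (eps : 'I_n -> bool)
    (x : 'I_n -> F) : 'rV[F]_n :=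
  \row_f (if f \in S then x f * orsign F (eps f) else 0).

Definition flow (F : pzRingType) (n : nat) (eps : 'I_n -> bool) (v : 'rV[F]_n)
    : 'I_n -> F :=
  fun f => v 0 f * orsign F (eps f).

Section Orientation.
Variables (F : pzRingType) (n : nat) (S : {set 'I_n}) (eps : 'I_n -> bool).

Lemma orientD (x y : 'I_n -> F) :
  orient S eps (fun f => x f + y f) = orient S eps x + orient S eps y.
Proof.
by apply/matrixP => i f; rewrite !mxE; case: (f \in S); rewrite ?addr0 ?mulrDl.
Qed.

Lemma orientZ (c : F) (x : 'I_n -> F) :
  orient S eps (fun f => c * x f) = c *: orient S eps x.
Proof.
by apply/matrixP => i f; rewrite !mxE; case: (f \in S); rewrite ?mulr0 ?mulrA.
Qed.

Lemma orient_flow (v : 'rV[F]_n) : {in ~: S, forall f, v 0 f = 0} ->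
  orient S eps (flow eps v) = v.
Proof.
move=> vS; apply/matrixP => i f; rewrite (ord1 i) !mxE.
case: (boolP (f \in S)) => fS; first by rewrite -mulrA orsignK mulr1.
by rewrite vS // inE.
Qed.

Lemma orient_sub (S' : {set 'I_n}) (eps' : 'I_n -> bool) (x : 'I_n -> F) :
  S' \subset S -> {in S', eps' =1 eps} ->
  orient S eps (fun f => if f \in S' then x f else 0) = orient S' eps' x.
Proof.
move=> sS' agree; apply/matrixP => i f; rewrite !mxE.
case: (boolP (f \in S')) => fS'; first by rewrite (subsetP sS') ?agree.
by rewrite mul0r; case: (f \in S).
Qed.

End Orientation.

Section CycleSpace.
Variables (F : fieldType) (m n : nat) (A : 'M[F]_(m, n)).

Local Notation cols S := (colsub (fun i : 'I_#|S| => enum_val i) A).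

Definition embed (S : {set 'I_n}) : 'M[F]_(#|S|, n) :=
  \matrix_(i, j) (enum_val i == j)%:R.

Lemma embed_mul_tr (S : {set 'I_n}) : embed S *m A^T = (cols S)^T.
Proof.
apply/matrixP => i j; rewrite !mxE (bigD1 (enum_val i)) //= big1 ?addr0.
  by rewrite !mxE eqxx mul1r.
by move=> k /negbTE nk; rewrite !mxE eq_sym nk mul0r.
Qed.

Lemma embed_orthonormal (S : {set 'I_n}) : embed S *m (embed S)^T = 1%:M.
Proof.
apply/matrixP => i j; rewrite !mxE (bigD1 (enum_val i)) //= big1 ?addr0.
  by rewrite !mxE eqxx mul1r (inj_eq enum_val_inj) eq_sym.
by move=> k /negbTE nk; rewrite !mxE eq_sym nk mul0r.
Qed.

Lemma embed_tr_entry (S : {set 'I_n}) (v : 'rV[F]_n) (j : 'I_#|S|) :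
  (v *m (embed S)^T) 0 j = v 0 (enum_val j).
Proof.
rewrite !mxE (bigD1 (enum_val j)) //= big1 ?addr0; first by rewrite !mxE eqxx mulr1.
by move=> g /negbTE ng; rewrite !mxE eq_sym ng mulr0.
Qed.

Lemma embed_projK (S : {set 'I_n}) (v : 'rV[F]_n) :
  {in ~: S, forall f, v 0 f = 0} -> v *m (embed S)^T *m embed S = v.
Proof.
move=> vS; apply/matrixP => i f; rewrite (ord1 i) !mxE.
under eq_bigr => j _ do rewrite embed_tr_entry mxE.
rewrite -(big_enum_val (fun g => v 0 g * (g == f)%:R)) /=.
case: (boolP (f \in S)) => fS.
  rewrite (bigD1 f) //= eqxx mulr1 big1 ?addr0 // => g /andP [_ /negbTE ->].
  by rewrite mulr0.
rewrite vS ?inE // big1 // => g gS; case: eqP => [gf|]; last by rewrite mulr0.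
by move: gS; rewrite gf (negbTE fS).
Qed.

Definition cycle_space (S : {set 'I_n}) : 'M[F]_(#|S|, n) :=
  kermx (cols S)^T *m embed S.

(* The embedding is injective, so the cycle space has dimension dim ker A_S. *)
Lemma rank_cycle_space (S : {set 'I_n}) :
  \rank (cycle_space S) = \rank (kermx (cols S)^T).
Proof.
apply/eqP; rewrite eqn_leq mxrankM_maxl /=.
rewrite -{1}(mulmx1 (kermx _)) -(embed_orthonormal S) mulmxA.
exact: mxrankM_maxl.
Qed.

Lemma cycle_spaceP (S : {set 'I_n}) (v : 'rV[F]_n) :
  reflect (v *m A^T = 0 /\ {in ~: S, forall f, v 0 f = 0})
          (v <= cycle_space S)%MS.
Proof.
apply: (iffP idP) => [|[vK vS]].
  case/submxP => D ->; rewrite /cycle_space mulmxA.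
  have /sub_kermxP kK : (D *m kermx (cols S)^T <= kermx (cols S)^T)%MS.
    exact: submxMl.
  split; first by rewrite -mulmxA embed_mul_tr.
  move=> f; rewrite inE => fS; rewrite !mxE big1 // => i _; rewrite !mxE.
  case: eqP => [fi|]; last by rewrite mulr0.
  by move: fS; rewrite -fi enum_valP.
rewrite -(embed_projK vS) submxMr //; apply/sub_kermxP.
by rewrite -embed_mul_tr mulmxA embed_projK.
Qed.

Lemma cycle_spaceS (S S' : {set 'I_n}) :
  S' \subset S -> (cycle_space S' <= cycle_space S)%MS.
Proof.
move=> sS'; apply/row_subP => i.
have /cycle_spaceP [vK vS'] := row_sub i (cycle_space S').
apply/cycle_spaceP; split => // f; rewrite !inE => fS; apply: vS'.
by rewrite inE; apply: contra fS; apply: (subsetP sS').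
Qed.

End CycleSpace.

Lemma rank_gap_witness (F : fieldType) (k1 k2 n : nat)
    (U : 'M[F]_(k1, n)) (V : 'M[F]_(k2, n)) (p : 'rV[F]_n) :
  ((\rank U).+1 < \rank V)%N -> exists2 y : 'rV[F]_n, (y <= V)%MS & ~~ (y <= U + p)%MS.
Proof.
move=> gap; case: (boolP (V <= U + p)%MS) => [VUp | /row_subPn [i Vi]].
  have Vle : (\rank V <= \rank U + \rank p)%N.
    exact: leq_trans (mxrankS VUp) (mxrank_adds_leqif U p).
  have := leq_trans gap Vle; rewrite -addn1 ltn_add2l ltnNge.
  by rewrite rank_leq_row.
by exists (row i V); rewrite ?row_sub.
Qed.

Lemma push_to_zero (F : realFieldType) (I : finType) (P : pred I) (x u : I -> F)
    (g : I) :
  (forall f, P f -> 0 <= x f) -> P g -> u g < 0 ->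
  exists t, [/\ 0 <= t, forall f, P f -> 0 <= x f + t * u f
               & exists2 f0, P f0 & x f0 + t * u f0 = 0].
Proof.
move=> x0 Pg ug.
pose Q := [pred f | P f && (u f < 0)].
have [f0 /andP [Pf0 uf0] f0min] := @arg_minP _ _ _ g Q (fun f => x f / - u f)
  (ltac:(by rewrite /= Pg ug)).
pose t := x f0 / - u f0.
have t0 : 0 <= t by rewrite divr_ge0 ?x0 // oppr_ge0 ltW.
exists t; split => // [f Pf|]; last first.
  by exists f0 => //; rewrite /t; field; rewrite ltr0_neq0.
case: (ltrP (u f) 0) => uf; last by rewrite addr_ge0 ?x0 // mulr_ge0.
have := f0min f; rewrite /= Pf uf -/t => /(_ isT).
by rewrite ler_pdivlMr ?oppr_gt0 // mulrN -subr_ge0 opprK.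
Qed.

Section Circulations.
Variables (F : realFieldType) (m n : nat) (A : 'M[F]_(m, n)).
Implicit Types (S : {set 'I_n}) (eps : 'I_n -> bool).

Definition circulation (S : {set 'I_n}) (eps : 'I_n -> bool) (x : 'I_n -> F) : Prop :=
  orient S eps x *m A^T = 0.

Lemma circulationD S eps (x y : 'I_n -> F) :
  circulation S eps x -> circulation S eps y -> circulation S eps (fun f => x f + y f).
Proof. by rewrite /circulation orientD mulmxDl => -> ->; rewrite addr0. Qed.

Lemma circulationZ S eps (c : F) (x : 'I_n -> F) :
  circulation S eps x -> circulation S eps (fun f => c * x f).
Proof. by rewrite /circulation orientZ -scalemxAl => ->; rewrite scaler0. Qed.

Lemma eq_circulation S eps (x y : 'I_n -> F) :
  x =1 y -> circulation S eps x -> circulation S eps y.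
Proof.
move=> exy; rewrite /circulation; suff -> : orient S eps y = orient S eps x by [].
by apply/matrixP => i f; rewrite !mxE exy.
Qed.

Lemma circulation0 S eps : circulation S eps (fun _ => 0 : F).
Proof.
rewrite /circulation; suff -> : orient S eps (fun _ => 0 : F) = 0 by rewrite mul0mx.
by apply/matrixP => i f; rewrite !mxE mul0r; case: (f \in S).
Qed.

Lemma circulation_sum S eps (I : eqType) (r : seq I) (x : I -> 'I_n -> F) :
  {in r, forall i, circulation S eps (x i)} ->
  circulation S eps (fun f => \sum_(i <- r) x i f).
Proof.
elim: r => [_|i r IHr cx].
  by apply: eq_circulation (circulation0 S eps) => f; rewrite big_nil.
have cr : {in r, forall j, circulation S eps (x j)}.
  by move=> j jr; apply: cx; rewrite inE jr orbT.
apply: eq_circulation (circulationD (cx i (mem_head _ _)) (IHr cr)) => f.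
by rewrite big_cons.
Qed.

Definition sconnected (S : {set 'I_n}) (eps : 'I_n -> bool) : Prop :=
  forall e, e \in S -> exists w : 'I_n -> nat,
    (0 < w e)%N /\ circulation S eps (fun f => (w f)%:R).

(* Summing the witnesses gives one integral circulation positive on all of S. *)
Lemma sconnected_total_witness S eps : sconnected S eps ->
  exists W : 'I_n -> nat, {in S, forall e, 0 < W e}%N /\
    circulation S eps (fun f => (W f)%:R).
Proof.
move=> scS.
have /fin_all_exists [w wP] : forall e, exists w : 'I_n -> nat,
    e \in S -> (0 < w e)%N /\ circulation S eps (fun f => (w f)%:R).
  move=> e; case: (boolP (e \in S)) => [/scS [w ?]|eS]; first by exists w.
  by exists (fun _ => 0%N).
exists (fun f => \sum_(e <- enum S) w e f)%N; split.
  move=> e eS; rewrite (bigD1_seq e) ?mem_enum ?enum_uniq //=.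
  by rewrite ltn_addr // (proj1 (wP e eS)).
apply: (@eq_circulation _ _ (fun f => \sum_(e <- enum S) (w e f)%:R)).
  by move=> f; rewrite natr_sum.
by apply: circulation_sum => e; rewrite mem_enum => /wP [].
Qed.

Lemma cycle_space_proper S S' eps : sconnected S eps -> S' \proper S ->
  (\rank (cycle_space A S') < \rank (cycle_space A S))%N.
Proof.
move=> scS /properP [sS' [e eS eS']]; have [w [we cw]] := scS e eS.
pose v := orient S eps (fun f => (w f)%:R : F).
have vS : (v <= cycle_space A S)%MS.
  by apply/cycle_spaceP; split => // f; rewrite inE => /negbTE fS; rewrite mxE fS.
have vS' : ~~ (v <= cycle_space A S')%MS.
  apply/negP => /cycle_spaceP [_ /(_ e)]; rewrite inE eS' mxE eS => /(_ isT) /eqP.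
  rewrite mulf_eq0 pnatr_eq0 eqn0Ngt we /orsign.
  by case: (eps e); rewrite ?oppr_eq0 oner_eq0.
have := mxrank_leqif_sup (cycle_spaceS A sS'); rewrite ltn_neqAle => [[-> ->]].
by rewrite andbT; apply: contra vS' => /(submx_trans vS).
Qed.

Definition support S (q : 'I_n -> F) : {set 'I_n} := [set f in S | 0 < q f].

(* The core construction: from a positive circulation x of S, a circulation
   x' positive on S' and vanishing on S \ S', and a circulation u vanishing
   at f1 and negative at f2 (both in S \ S'), build a nonnegative circulation
   whose support lies strictly between S' and S: push x along u until a
   coordinate of S \ S' vanishes, then add a large multiple of x'. *)
Lemma intermediate_circulation S S' eps (x x' u : 'I_n -> F) (f1 f2 : 'I_n) :
  S' \subset S ->
  {in S, forall f, 0 < x f} -> circulation S eps x ->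
  {in S', forall f, 1 <= x' f} -> {in S :\: S', forall f, x' f = 0} ->
  circulation S eps x' ->
  circulation S eps u -> f1 \in S :\: S' -> u f1 = 0 -> f2 \in S :\: S' -> u f2 < 0 ->
  exists q, [/\ {in S, forall f, 0 <= q f}, circulation S eps q,
                S' \proper support S q & support S q \proper S].
Proof.
move=> sS' xpos cx x'1 x'0 cx' cu f1D uf1 f2D uf2.
have xD : forall f, f \in S :\: S' -> 0 <= x f.
  by move=> f; rewrite in_setD => /andP [_ /xpos /ltW].
have [t [t0 rpos [f0 f0D rf0]]] := push_to_zero xD f2D uf2.
pose r f := x f + t * u f; pose lam := 1 + \sum_f `|r f|.
have rlam f : `|r f| < lam.
  rewrite /lam (bigD1 f) //=.
  have : 0 <= \sum_(g | g != f) `|r g| by apply: sumr_ge0.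
  lra.
pose q f := r f + lam * x' f.
have qS' : {in S', forall f, 0 < q f}.
  move=> f fS'; have lam0 : 0 < lam := le_lt_trans (normr_ge0 _) (rlam f).
  have : lam <= lam * x' f by rewrite ler_pMr ?x'1.
  have := lerNnormlW (lexx `|r f|); have := rlam f; rewrite /q; lra.
have qD f : f \in S :\: S' -> q f = r f.
  by move/x'0; rewrite /q => ->; rewrite mulr0 addr0.
exists q; split.
- move=> f fS; case: (boolP (f \in S')) => [/qS' /ltW //|fS'].
  by rewrite qD ?rpos // in_setD fS' fS.
- exact: circulationD (circulationD cx (circulationZ t cu)) (circulationZ lam cx').
- apply/properP; split.
    by apply/subsetP => f fS'; rewrite inE (subsetP sS') ?qS'.
  exists f1; last by move: f1D; rewrite in_setD => /andP [].
  move: (f1D); rewrite in_setD => /andP [_ f1S].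
  by rewrite inE f1S qD // /r uf1 mulr0 addr0 xpos.
- apply/properP; split; first by apply/subsetP => f; rewrite inE => /andP [].
  exists f0; first by move: f0D; rewrite in_setD => /andP [].
  by rewrite inE qD // /r rf0 ltxx andbF.
Qed.

Lemma circulation_between S S' eps eps' :
  sconnected S eps -> sconnected S' eps' -> S' \subset S -> {in S', eps' =1 eps} ->
  ((\rank (cycle_space A S')).+1 < \rank (cycle_space A S))%N ->
  exists q, [/\ {in S, forall f, 0 <= q f}, circulation S eps q,
                S' \proper support S q & support S q \proper S].
Proof.
move=> scS scS' sS' agree gap.
have [W [Wpos cx]] := sconnected_total_witness scS.
have [W' [W'pos cW']] := sconnected_total_witness scS'.
pose x f : F := (W f)%:R; pose x' f : F := if f \in S' then (W' f)%:R else 0.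
have cx' : circulation S eps x' by rewrite /circulation (orient_sub _ sS' agree).
have [f1 f1S f1S'] : exists2 f1, f1 \in S & f1 \notin S'.
  apply/subsetPn; apply: contraTN gap => sSS'.
  have -> : S = S' by apply/eqP; rewrite eqEsubset sSS'.
  by rewrite -leqNgt.
have f1D : f1 \in S :\: S' by rewrite in_setD f1S' f1S.
pose p := orient S eps x.
have [y yS ny] := rank_gap_witness p gap.
have /cycle_spaceP [yK ysupp] := yS.
have cy : circulation S eps (flow eps y) by rewrite /circulation orient_flow.
pose c := flow eps y f1 / x f1; pose d f := flow eps y f + (- c) * x f.
have cd : circulation S eps d := circulationD cy (circulationZ (- c) cx).
have df1 : d f1 = 0.
  by rewrite /d /c mulNr divfK ?subrr // pnatr_eq0 -lt0n Wpos.
have [f2 f2D df2] : exists2 f2, f2 \in S :\: S' & d f2 != 0.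
  apply/exists_inP; apply: contraNT ny; rewrite negb_exists_in => /forall_inP dz.
  have dS' : (orient S eps d <= cycle_space A S')%MS.
    apply/cycle_spaceP; split => // f; rewrite inE => fS'; rewrite mxE.
    case: (boolP (f \in S)) => // fS.
    by move: (dz f); rewrite in_setD fS' fS negbK => /(_ isT) /eqP ->; rewrite mul0r.
  have -> : y = orient S eps d + c *: p.
    by rewrite orientD orientZ orient_flow // scaleNr subrK.
  exact: addmx_sub_adds dS' (scalemx_sub c (submx_refl p)).
pose s : F := if d f2 < 0 then 1 else -1.
apply: (intermediate_circulation sS' _ cx _ _ cx' (circulationZ s cd) f1D _ f2D).
- by move=> f /Wpos; rewrite ltr0n.
- by move=> f fS'; rewrite /x' /= ifT ?ler1n ?W'pos.
- by move=> f; rewrite in_setD => /andP [fS' _]; rewrite /x' /= ifN.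
- by rewrite df1 mulr0.
- rewrite /s; case: (ltrP (d f2) 0) => d2; rewrite ?mul1r // mulN1r oppr_lt0.
  by rewrite lt_neqAle eq_sym df2.
Qed.

End Circulations.

Lemma common_denominator (I : finType) (q : I -> rat) :
  exists2 D : nat, (0 < D)%N & forall i, q i * D%:R \is a Num.int.
Proof.
pose Dz := \prod_i denq (q i).
have Dz0 : 0 < Dz by apply: prodr_gt0 => i _; apply: denq_gt0.
exists `|Dz|%N; first by rewrite absz_gt0 gt_eqF.
move=> i; rewrite natr_absz gtr0_norm // /Dz (bigD1 i) //= rmorphM /= mulrA -numqE.
by rewrite -rmorphM /= intr_int.
Qed.

(* Over the rationals, the support of a nonnegative circulation is strongly
   connected: clearing denominators gives an integral witness for every element. *)
Lemma support_sconnected (m n : nat) (A : 'M[rat]_(m, n)) (S : {set 'I_n})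
    (eps : 'I_n -> bool) (q : 'I_n -> rat) :
  {in S, forall f, 0 <= q f} -> circulation A S eps q -> sconnected A (support S q) eps.
Proof.
move=> q0 cq; have [D D0 Dint] := common_denominator q.
pose w f := Num.truncn (q f * D%:R).
have wE f : f \in S -> (w f)%:R = q f * D%:R.
  by move=> fS; apply: truncnK; rewrite natrEint Dint mulr_ge0 ?ler0n ?q0.
move=> e; rewrite inE => /andP [eS qe]; exists w; split.
  by rewrite -(ltr0n rat) wE // mulr_gt0 // ltr0n.
rewrite /circulation.
suff -> : orient (support S q) eps (fun f => (w f)%:R) = D%:R *: orient S eps q.
  by rewrite -scalemxAl cq scaler0.
apply/matrixP => i f; rewrite !mxE inE.
case: (boolP (f \in S)) => fS /=; last by rewrite mulr0.
case: ltrP => qf; first by rewrite wE // mulrAC mulrC.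
have -> : q f = 0 by apply/eqP; rewrite eq_le qf q0.
by rewrite mul0r mulr0.
Qed.

Section RationalModel.
Variables (R : realType) (m n : nat) (M : 'M[R]_(m, n)).
Hypothesis TU : totally_unimodular M.
Implicit Types (S : {set 'I_n}) (eps : 'I_n -> bool).

Definition unit_round (x : R) : rat :=
  if x == 1 then 1 else if x == -1 then -1 else 0.

Lemma unit_roundK (x : R) : x \in [:: 0; 1; -1] -> ratr (unit_round x) = x.
Proof.
have n1N1 : (1 == -1 :> R) = false.
  by rewrite -subr_eq0 opprK -(natrD R 1 1) pnatr_eq0.
rewrite /unit_round !inE => /or3P [] /eqP ->.
- by rewrite eq_sym oner_eq0 eq_sym oppr_eq0 oner_eq0 rmorph0.
- by rewrite eqxx rmorph1.
- by rewrite eq_sym n1N1 eqxx rmorphN1.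
Qed.

(* The entries of a totally unimodular matrix lie in {0, 1, -1}, so M is the
   image of the rational matrix rat_model. *)
Definition rat_model : 'M[rat]_(m, n) := map_mx unit_round M.

Lemma rat_model_entry i j : ratr (unit_round (M i j)) = M i j.
Proof.
rewrite unit_roundK //.
by have := TU (fun _ : 'I_1 => i) (fun _ => j); rewrite det_mx11 mxE.
Qed.

Lemma rat_modelE : map_mx (@ratr R) rat_model = M.
Proof. by apply/matrixP => i j; rewrite !mxE rat_model_entry. Qed.

Lemma genus_rat_model S eps :
  osub_genus M S eps = \rank (cycle_space rat_model S).
Proof.
rewrite /osub_genus /dimker /colsubset rank_cycle_space -rat_modelE.
by rewrite -map_mxsub map_trmx -map_kermx mxrank_map.
Qed.

Lemma witness_rat_model S eps (w : 'I_n -> nat) :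
  (\sum_(f in S) ((w f)%:R * sgn R (eps f)) *: col f M = 0) <->
  circulation rat_model S eps (fun f => (w f)%:R).
Proof.
have -> : \sum_(f in S) ((w f)%:R * sgn R (eps f)) *: col f M =
    (map_mx (@ratr R) (orient S eps (fun f => (w f)%:R) *m rat_model^T))^T.
  apply/matrixP => i j; rewrite (ord1 j) !mxE summxE rmorph_sum [LHS]big_mkcond.
  apply: eq_bigr => f _; rewrite !mxE.
  case: (f \in S); last by rewrite mul0r raddf0.
  rewrite !rmorphM /= ratr_nat rat_model_entry; congr (_ * _ * _).
  by case: (eps f); rewrite /= ?rmorph1 ?rmorphN1.
rewrite /circulation; split => [/(congr1 trmx)|->]; last by rewrite raddf0 trmx0.
by rewrite trmxK trmx0 => /eqP; rewrite map_mx_eq0 => /eqP.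
Qed.

Lemma sconnected_rat_model S eps :
  strongly_connected M S eps <-> sconnected rat_model S eps.
Proof.
split=> scS e /scS [w [we cw]]; exists w; split => //; exact/witness_rat_model.
Qed.

End RationalModel.

Theorem mainTheorem3 (R : realType) (m n : nat) (M : 'M[R]_(m, n)) :
  totally_unimodular M ->
  (forall (S : {set 'I_n}) (eps : 'I_n -> bool)
          (S' : {set 'I_n}) (eps' : 'I_n -> bool),
      strongly_connected M S eps -> strongly_connected M S' eps' ->
      osub_le S eps S' eps' -> S' \proper S ->
      (osub_genus M S' eps' < osub_genus M S eps)%N)
  /\
  (forall (S : {set 'I_n}) (eps : 'I_n -> bool)
          (S' : {set 'I_n}) (eps' : 'I_n -> bool),
      strongly_connected M S eps -> strongly_connected M S' eps' ->
      sc_covers M S eps S' eps' ->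
      sc_degree M S' eps' = sc_degree M S eps + 1).
Proof.
move=> TU; have scQ := sconnected_rat_model TU; split.
  move=> S eps S' eps' /scQ scS _ _ ltS; rewrite !(genus_rat_model TU).
  exact: cycle_space_proper scS ltS.
move=> S eps S' eps' /scQ scS /scQ scS' [[[sS' agree] neqS] noT].
have ltS : S' \proper S by rewrite properEneq neqS sS'.
have up := cycle_space_proper scS ltS.
have down : (\rank (cycle_space (rat_model M) S) <=
             (\rank (cycle_space (rat_model M) S')).+1)%N.
  rewrite leqNgt; apply/negP => gap.
  have [q [q0 cq S'q qS]] := circulation_between scS scS' sS' agree gap.
  apply: noT; exists (support S q), eps; split; first exact/scQ/support_sconnected.
  move: S'q qS; rewrite !properEneq => /andP [neqS' sS'q] /andP [neqSq sqS].
  by split; split => //; split.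
rewrite /sc_degree !(genus_rat_model TU).
have -> : \rank (cycle_space (rat_model M) S) =
          (\rank (cycle_space (rat_model M) S')).+1.
  by apply/eqP; rewrite eqn_leq up down.
by rewrite -addn1 PoszD; ring.
Qed.
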